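(* Let $p$ be a prime, $\alpha$ a positive integer, and $n,k,m$ nonnegative integers with $k\le n$. Suppose that $u_1,\dots,u_{n-k}\in\mathbb{Z}^n$ and $v_1,\dots,v_m\in\mathbb{Z}^n$ satisfy \begin{align*} u_i\cdot u_i&\not\equiv 0\pmod{p^\alpha}\ \text{for all } i,\\ u_i\cdot u_j&\equiv 0\pmod{p^\alpha}\ \text{for all } i\neq j,\\ v_i\cdot v_j&\equiv 0\pmod{p^\alpha}\ \text{for all } i,j,\\ u_i\cdot v_j&\equiv 0\pmod{p^\alpha}\ \text{for all } i,j. \end{align*} Then the subspace of $\mathbb{F}_p^n$ spanned by $v_1\bmod p,\dots,v_m\bmod p$ has dimension at most $k/2$.
   Context: Here $x\cdot y=\sum_t x^{(t)}y^{(t)}$ denotes the standard integer dot product on $\mathbb{Z}^n$, and $v\bmod p$ denotes the coordinatewise reduction into $\mathbb{F}_p^n$. *)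

From HB Require Import structures.
From mathcomp Require Import all_boot all_order all_algebra.
Set Implicit Arguments. Unset Strict Implicit. Unset Printing Implicit Defensive.
Import Order.TTheory GRing.Theory Num.Theory.
Local Open Scope ring_scope.

Definition zdot (n : nat) (x y : 'rV[int]_n) : int :=
  \sum_(t < n) x 0 t * y 0 t.

Definition modp_vec (p n : nat) (v : 'rV[int]_n) : 'rV['F_p]_n :=
  map_mx (fun z : int => z%:~R) v.

From HB Require Import structures.
From mathcomp Require Import all_boot all_order all_algebra.
Import Order.TTheory GRing.Theory Num.Theory.
Local Open Scope ring_scope.
Set Implicit Arguments. Unset Strict Implicit. Unset Printing Implicit Defensive.

(* Let r be the dimension of the span of the v_j mod p. Lift a basis of this
   span to integer combinations b_1, ..., b_r of the v_j, and lift a dual family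
   w_1, ..., w_r with w_j . b_l = [j == l] mod p. The n - k + 2r integer vectors
   u_i, b_j, w_j are then linearly independent over Z. In an integer relation
   with coefficients a, b, c, dotting with the b_l shows c = 0 mod p^alpha (the
   Gram matrix (w_j . b_l) is invertible mod p^alpha); dotting with u_l then
   leaves a_l (u_l . u_l) = 0 mod p^alpha, so p divides a_l; reducing mod p,
   the freeness of the b_j mod p gives b = 0 mod p. A relation whose
   coefficients are all divisible by p can be divided by p, so by descent every
   relation is trivial, and n - k + 2r <= n. *)

Lemma mul_trmx_zdot a b n (A : 'M[int]_(a, n)) (B : 'M[int]_(b, n)) i j :
  (A *m B^T) i j = zdot (row i A) (row j B).
Proof. by rewrite mxE; apply: eq_bigr => t _; rewrite !mxE. Qed.

Notation modp_mx p A := (map_mx (fun z : int => (z%:~R : 'F_p)) A).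

Lemma Fp_intr_eq0 p (z : int) : prime p -> (z%:~R == 0 :> 'F_p) = (p%:Z %| z)%Z.
Proof.
move=> p_pr; rewrite dvdzE (dvdn_pcharf (pchar_Fp p_pr)).
by case: z => m; rewrite ?NegzE ?mulrNz ?oppr_eq0.
Qed.

Lemma modp_mx_eq0 p m n (A : 'M[int]_(m, n)) : prime p ->
  (modp_mx p A == 0) = (A \is a mxOver (dvdz p)).
Proof.
move=> p_pr; apply/eqP/mxOverP => [/matrixP A0 i j | Ap].
  by rewrite -Fp_intr_eq0 //; have := A0 i j; rewrite !mxE => ->.
by apply/matrixP => i j; rewrite !mxE; apply/eqP; rewrite Fp_intr_eq0.
Qed.

Lemma modp_mx_lift p m n (A : 'M['F_p]_(m, n)) :
  exists Az : 'M[int]_(m, n), modp_mx p Az = A.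
Proof.
exists (map_mx (fun x : 'F_p => (x : nat)%:Z) A).
by apply/matrixP => i j; rewrite !mxE -pmulrn natr_Zp.
Qed.

Lemma coprimez_pexp p k (z : int) : prime p -> ~~ (p%:Z %| z)%Z ->
  coprimez (p ^ k)%:Z z.
Proof. by move=> p_pr p'z; rewrite coprimezE coprimeXl // prime_coprime. Qed.

Lemma mxOver_trmx (T : Type) (S : {pred T}) a b (A : 'M[T]_(a, b)) :
  (A^T \is a mxOver S) = (A \is a mxOver S).
Proof. by apply/mxOverP/mxOverP => SA i j; have := SA j i; rewrite mxE. Qed.

Lemma mxOver_row_mx (T : Type) (S : {pred T}) m n1 n2
    (A : 'M[T]_(m, n1)) (B : 'M[T]_(m, n2)) :
  A \is a mxOver S -> B \is a mxOver S -> row_mx A B \is a mxOver S.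
Proof.
move=> /mxOverP SA /mxOverP SB; apply/mxOverP => i j.
by rewrite mxE; case: split.
Qed.

Section DvdzMatrix.
Variable d : int.

Lemma mxOver_dvdz_mull a b c (A : 'M[int]_(a, b)) (B : 'M[int]_(b, c)) :
  B \is a mxOver (dvdz d) -> A *m B \is a mxOver (dvdz d).
Proof.
move=> /mxOverP dB; apply/mxOverP => i j; rewrite mxE rpred_sum // => k _.
exact: dvdz_mull.
Qed.

Lemma mxOver_dvdz_mulr a b c (A : 'M[int]_(a, b)) (B : 'M[int]_(b, c)) :
  A \is a mxOver (dvdz d) -> A *m B \is a mxOver (dvdz d).
Proof.
move=> /mxOverP dA; apply/mxOverP => i j; rewrite mxE rpred_sum // => k _.
exact: dvdz_mulr.
Qed.

Lemma mxOver_dvdz_det_coprime a b (C : 'M[int]_(a, b)) (G : 'M[int]_b) :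
  coprimez d (\det G) ->
  C *m G \is a mxOver (dvdz d) -> C \is a mxOver (dvdz d).
Proof.
move=> coprime_dG /(mxOver_dvdz_mulr (\adj G)).
rewrite -mulmxA mul_mx_adj mul_mx_scalar => /mxOverP dGC.
by apply/mxOverP => i j; have := dGC i j; rewrite mxE Gauss_dvdzr.
Qed.

End DvdzMatrix.

Lemma int_kernel_descent (d : nat) m n (M : 'M[int]_(m, n)) : (1 < d)%N ->
  (forall x : 'rV[int]_m, x *m M = 0 -> x \is a mxOver (dvdz d)) ->
  forall x : 'rV[int]_m, x *m M = 0 -> x = 0.
Proof.
move=> d_gt1 dvd_ker.
have d_neq0 : d%:Z != 0 by rewrite eqz_nat -lt0n ltnW.
have dvd_exp k (x : 'rV[int]_m) :
    x *m M = 0 -> x \is a mxOver (dvdz (d ^ k)%:Z).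
  elim: k x => [|k IHk] x xM0; first by apply/mxOverP => i j; rewrite dvd1z.
  have /mxOverP d_x := dvd_ker x xM0.
  pose y := map_mx (fun z => (z %/ d)%Z) x.
  have def_x : x = d%:Z *: y.
    by apply/matrixP => i j; rewrite !mxE mulrC divzK ?d_x.
  have /mxOverP dk_y : y \is a mxOver (dvdz (d ^ k)%:Z).
    apply: IHk; apply: (scalemx_inj d_neq0).
    by rewrite scaler0 scalemxAl -def_x.
  apply/mxOverP => i j; rewrite def_x mxE expnSr PoszM mulrC.
  exact: dvdz_mul.
move=> x xM0; apply/rowP => i; rewrite mxE; apply/eqP.
rewrite -absz_eq0 -leqn0 leqNgt; apply/negP => xi_gt0.
have /mxOverP /(_ ord0 i) := dvd_exp (absz (x 0 i)) x xM0.
by rewrite dvdzE /= => /(dvdn_leq xi_gt0); rewrite leqNgt ltn_expl.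
Qed.

Lemma int_kernel0_leq m n (M : 'M[int]_(m, n)) :
  (forall x : 'rV[int]_m, x *m M = 0 -> x = 0) -> (m <= n)%N.
Proof.
move=> kerM0; rewrite leqNgt; apply/negP => lt_nm.
(* Row n of the Smith form L *m D *m R of M vanishes, so row n of L^-1 is a
   nonzero kernel vector. *)
have [L L_unit [R _ [d _ defM]]] := int_Smith_normal_form M.
pose i0 : 'I_m := Ordinal lt_nm.
pose x := row i0 (invmx L).
have xL : x *m L = row i0 1%:M by rewrite -row_mul mulVmx.
suff /kerM0 x0 : x *m M = 0.
  by move/rowP: xL => /(_ i0); rewrite x0 mul0mx !mxE eqxx.
rewrite defM /x -row_mul !mulmxA mulVmx // mul1mx row_mul.
suff -> : row i0 (\matrix_(i, j) (d`_i *+ (i == j :> nat)) : 'M[int]_(m, n)) = 0.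
  by rewrite mul0mx.
apply/rowP => j; rewrite !mxE; case: eqP => //= eq_ij.
by move: (ltn_ord j); rewrite -eq_ij ltnn.
Qed.

Lemma span_rows_basis (K : fieldType) m n (X : 'M[K]_(m, n)) :
  exists C : 'M[K]_(\dim (span [seq row j X | j <- enum 'I_m]), m),
    row_free (C *m X).
Proof.
set W := span _.
have coefs i : exists c : 'I_m -> K, tnth (vbasis W) i = \sum_j c j *: row j X.
  move: (tnth _ i) (vbasis_mem (mem_tnth i (vbasis W))) => x.
  rewrite /W span_def big_map big_enum /= => /memv_sumP [xs xs_line ->].
  have /fin_all_exists [c def_xs] j : exists cj, xs j = cj *: row j X.
    exact/vlineP/xs_line.
  by exists c; apply: eq_bigr => j _; apply: def_xs.
have [c def_basis] := fin_all_exists coefs.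
exists (\matrix_(i, j) c i j).
rewrite -kermx_eq0; apply/rowV0P => y /sub_kermxP yCX0; apply/rowP => i.
rewrite mxE; move/freeP: (basis_free (vbasisP W)) => /(_ (fun k => y 0 k)).
apply.
rewrite -[RHS]yCX0 mulmx_sum_row; apply: eq_bigr => k _.
rewrite -(tnth_nth 0) def_basis row_mul mulmx_sum_row; congr (_ *: _).
by apply: eq_bigr => j _; rewrite !mxE.
Qed.

Lemma modp_rowspace_dual_lift p m n (V : 'M[int]_(m, n)) :
  let r := \dim (span [seq row j (modp_mx p V) | j <- enum 'I_m]) in
  exists (C : 'M[int]_(r, m)) (W : 'M[int]_(r, n)),
    row_free (modp_mx p (C *m V)) /\ modp_mx p (W *m (C *m V)^T) = 1%:M.
Proof.
have [Cp Bp_free] := span_rows_basis (modp_mx p V).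
have [C def_Cp] := modp_mx_lift Cp.
have [Y BY1] := row_freeP Bp_free.
have [Z def_Y] := modp_mx_lift Y.
exists C, Z^T; rewrite map_mxM def_Cp; split=> //.
by rewrite map_mxM -!map_trmx def_Y -trmx_mul map_mxM def_Cp BY1 trmx1.
Qed.

Section BlockRelation.
Variables (p alpha n N r : nat).
Hypotheses (p_pr : prime p) (alpha_gt0 : (0 < alpha)%N).
Local Notation q := (p ^ alpha)%:Z.

Variables (U : 'M[int]_(N, n)) (B W : 'M[int]_(r, n)).
Hypothesis UUt_diag : forall i, ~~ (q %| (U *m U^T) i i)%Z.
Hypothesis UUt_offdiag : forall i j, i != j -> (q %| (U *m U^T) i j)%Z.
Hypothesis UBt_dvdz : U *m B^T \is a mxOver (dvdz q).
Hypothesis BBt_dvdz : B *m B^T \is a mxOver (dvdz q).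
Hypothesis WBt_modp : modp_mx p (W *m B^T) = 1%:M.
Hypothesis B_modp_free : row_free (modp_mx p B).

Let dvdz_p_q : {subset dvdz q <= dvdz p}.
Proof. by move=> z; apply: dvdz_trans; rewrite dvdzE /= dvdn_exp. Qed.

Section Relation.
Variables (a : 'rV[int]_N) (b c : 'rV[int]_r).
Hypothesis rel : a *m U + b *m B + c *m W = 0.

Lemma rel_coefW_dvdq : c \is a mxOver (dvdz q).
Proof.
have relBt : c *m (W *m B^T) = - (a *m (U *m B^T) + b *m (B *m B^T)).
  by apply/eqP; rewrite -addr_eq0 addrC !mulmxA -!mulmxDl rel mul0mx.
apply: (mxOver_dvdz_det_coprime (G := W *m B^T)).
  apply: coprimez_pexp => //; rewrite -Fp_intr_eq0 // -det_map_mx WBt_modp.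
  by rewrite det1 oner_eq0.
by rewrite relBt rpredN rpredD // mxOver_dvdz_mull.
Qed.

Lemma rel_coefU_dvdp : a \is a mxOver (dvdz p).
Proof.
have relUt : a *m (U *m U^T) = - (b *m (B *m U^T) + c *m (W *m U^T)).
  by apply/eqP; rewrite -addr_eq0 addrA !mulmxA -!mulmxDl rel mul0mx.
have /mxOverP aUUt_dvdz : a *m (U *m U^T) \is a mxOver (dvdz q).
  rewrite relUt rpredN; apply: rpredD.
    by apply: mxOver_dvdz_mull; rewrite -mxOver_trmx trmx_mul trmxK.
  by apply: mxOver_dvdz_mulr; apply: rel_coefW_dvdq.
apply/mxOverP => i0 l; rewrite [i0]ord1; apply: contraR (UUt_diag l) => p'al.
have := aUUt_dvdz 0 l; rewrite mxE (bigD1 l) //= rpredDr.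
  by rewrite Gauss_dvdzr // coprimez_pexp.
by rewrite rpred_sum // => i /UUt_offdiag /(dvdz_mull (a 0 i)).
Qed.

Lemma rel_coefB_dvdp : b \is a mxOver (dvdz p).
Proof.
have /eqP a_modp0 : modp_mx p a == 0 by rewrite modp_mx_eq0 // rel_coefU_dvdp.
have /eqP c_modp0 : modp_mx p c == 0.
  by rewrite modp_mx_eq0 // (mxOverS dvdz_p_q) ?rel_coefW_dvdq.
have : modp_mx p (a *m U + b *m B + c *m W) = 0 by rewrite rel map_mx0.
rewrite !map_mxD !map_mxM a_modp0 c_modp0 !mul0mx add0r addr0 => /eqP.
by rewrite mulmx_free_eq0 // modp_mx_eq0.
Qed.

End Relation.

Lemma block_kernel_dvdp (x : 'rV[int]_(N + (r + r))) :
  x *m col_mx U (col_mx B W) = 0 -> x \is a mxOver (dvdz p).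
Proof.
rewrite -[x]hsubmxK -[rsubmx x]hsubmxK !mul_row_col addrA => rel.
rewrite !mxOver_row_mx ?(rel_coefU_dvdp rel) ?(rel_coefB_dvdp rel) //.
by rewrite (mxOverS dvdz_p_q) ?(rel_coefW_dvdq rel).
Qed.

End BlockRelation.

Theorem lemma2p1 (p alpha n k m : nat) (hp : prime p) (halpha : (0 < alpha)%N)
  (hkn : (k <= n)%N)
  (u : 'I_(n - k) -> 'rV[int]_n) (v : 'I_m -> 'rV[int]_n)
  (huu : forall i, ~~ ((p ^ alpha)%:Z %| zdot (u i) (u i))%Z)
  (huu' : forall i j, i != j -> ((p ^ alpha)%:Z %| zdot (u i) (u j))%Z)
  (hvv : forall i j, ((p ^ alpha)%:Z %| zdot (v i) (v j))%Z)
  (huv : forall i j, ((p ^ alpha)%:Z %| zdot (u i) (v j))%Z) :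
  (2 * \dim (span [seq modp_vec p (v j) | j <- enum 'I_m]) <= k)%N.
Proof.
pose U := \matrix_i u i; pose V := \matrix_j v j.
have UUt i j : (U *m U^T) i j = zdot (u i) (u j) by rewrite mul_trmx_zdot !rowK.
have UUt_diag i : ~~ ((p ^ alpha)%:Z %| (U *m U^T) i i)%Z by rewrite UUt.
have UUt_offdiag i j : i != j -> ((p ^ alpha)%:Z %| (U *m U^T) i j)%Z.
  by rewrite UUt; apply: huu'.
have UVt_dvdz : U *m V^T \is a mxOver (dvdz (p ^ alpha)%:Z).
  by apply/mxOverP => i j; rewrite mul_trmx_zdot !rowK.
have VVt_dvdz : V *m V^T \is a mxOver (dvdz (p ^ alpha)%:Z).
  by apply/mxOverP => i j; rewrite mul_trmx_zdot !rowK.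
have -> : [seq modp_vec p (v j) | j <- enum 'I_m] =
          [seq row j (modp_mx p V) | j <- enum 'I_m].
  by apply: eq_map => j; rewrite -map_row rowK.
have [C [W [B_free WBt_modp]]] := modp_rowspace_dual_lift p V.
pose B := C *m V.
have UBt_dvdz : U *m B^T \is a mxOver (dvdz (p ^ alpha)%:Z).
  by rewrite trmx_mul mulmxA mxOver_dvdz_mulr.
have BBt_dvdz : B *m B^T \is a mxOver (dvdz (p ^ alpha)%:Z).
  by rewrite trmx_mul mulmxA mxOver_dvdz_mulr // -mulmxA mxOver_dvdz_mull.
have kernel_dvdp := block_kernel_dvdp hp halpha UUt_diag UUt_offdiag
  UBt_dvdz BBt_dvdz WBt_modp B_free.
have le_rows := int_kernel0_leq (int_kernel_descent (prime_gt1 hp) kernel_dvdp).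
by rewrite mul2n -addnn -(leq_add2l (n - k)) subnK.
Qed.
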